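(* Let $f(X)=X+\frac{1}{X}$. There are infinitely many pairs of positive rational numbers $(y,z)$ such that $f(4/3)\,f(y)=f(z)$. *)

From HB Require Import structures.
From mathcomp Require Import all_boot all_order all_algebra.
Set Implicit Arguments. Unset Strict Implicit. Unset Printing Implicit Defensive.
Import Order.TTheory GRing.Theory Num.Theory.
Local Open Scope ring_scope.

Definition f (x : rat) : rat := x + x^-1.

(* Clearing denominators, f(4/3) f(y) = f(z) reads 12 y (z^2 + 1) = 25 z (y^2 + 1); as a
   quadratic in z it is solvable exactly when 625 y^4 + 674 y^2 + 625 is a rational square.
   This quartic is birational to the elliptic curve E : Y^2 = (x + 674)(x^2 - 1250^2), and
   E has a point of infinite order: in Jacobian coordinates (X : Y : Z) with X, Y odd and
   Z even, doubling keeps X, Y odd and multiplies Z by 2Y, so the 2-adic valuation of the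
   abscissa X / Z^2 drops by 2 at each doubling.  The multiples 2^n P are therefore
   pairwise distinct, and so are the solutions (y, z) they produce. *)
From Stdlib Require Import ZArith Lia.
From HB Require Import structures.
From mathcomp Require Import all_boot all_order all_algebra.
From mathcomp Require Import ssrZ ring lra.
Import Order.TTheory GRing.Theory Num.Theory.

Set Implicit Arguments.
Unset Strict Implicit.
Unset Printing Implicit Defensive.

Record jpoint := JPoint { jx : Z; jy : Z; jz : Z }.

Section IntegralJacobianPoints.
Local Open Scope Z_scope.

Section Doubling.
Variables a b c : Z.

(* Jacobian coordinates: (X : Y : Z) stands for the point (X / Z^2, Y / Z^3) of
   y^2 = x^3 + a x^2 + b x + c. *)
Definition jcurve (P : jpoint) : Prop :=
  jy P ^ 2 = jx P ^ 3 + a * jx P ^ 2 * jz P ^ 2 + b * jx P * jz P ^ 4 + c * jz P ^ 6.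

(* The tangent slope is M / (2 Y Z). *)
Definition jdouble '(JPoint X Y Zc) : jpoint :=
  let M := 3 * X ^ 2 + 2 * a * X * Zc ^ 2 + b * Zc ^ 4 in
  let X' := M ^ 2 - 4 * a * Y ^ 2 * Zc ^ 2 - 8 * X * Y ^ 2 in
  JPoint X' (M * (4 * X * Y ^ 2 - X') - 8 * Y ^ 4) (2 * Y * Zc).

Lemma jcurve_double P : jcurve P -> jcurve (jdouble P).
Proof. by case: P => X Y Zc; rewrite /jcurve; cbn [jdouble jx jy jz] => onC; ring [onC]. Qed.

Lemma jdouble_odd P : Z.even (jz P) -> Z.odd (jx P) -> Z.odd (jy P) ->
  Z.odd (jx (jdouble P)) /\ Z.odd (jy (jdouble P)).
Proof.
case: P => X Y Zc; cbn [jdouble jx jy jz] => eZ oX oY.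
have oZ : Z.odd Zc = false by rewrite -Z.negb_even eZ.
by rewrite !(Z.odd_sub, Z.odd_add, Z.odd_mul, Z.odd_pow) ?oX ?oY ?oZ ?andbF //=.
Qed.

Definition jodd_v2 (k : nat) (P : jpoint) : Prop :=
  [/\ Z.odd (jx P), Z.odd (jy P) & exists2 W, Z.odd W & jz P = 2 ^ Z.of_nat k * W].

Lemma jdouble_v2 k P : jodd_v2 k.+1 P -> jodd_v2 k.+2 (jdouble P).
Proof.
case=> oX oY [W oW eZ].
have evZ : Z.even (jz P).
  by rewrite eZ Nat2Z.inj_succ Z.pow_succ_r ?Z.even_mul //; lia.
have [oX' oY'] := jdouble_odd evZ oX oY.
split=> //; exists (jy P * W); first by rewrite Z.odd_mul oY oW.
case: P eZ {oX oY evZ oX' oY'} => X Y Zc; cbn [jdouble jy jz] => ->.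
by rewrite (Nat2Z.inj_succ k.+1) Z.pow_succ_r; [ring | lia].
Qed.

End Doubling.

Lemma odd_mul_sq_pow2_neq (A B C D : Z) (m n : nat) :
  Z.odd A -> Z.odd B -> Z.odd C -> Z.odd D -> (m < n)%N ->
  A * (2 ^ Z.of_nat m * C) ^ 2 <> B * (2 ^ Z.of_nat n * D) ^ 2.
Proof.
move=> oA oB oC oD lt_mn E.
have [k def_n] : exists k, n = (m + k.+1)%N by exists (n - m.+1)%N; rewrite -addSnnS subnKC.
have pow_pos : 0 < 2 ^ Z.of_nat m by apply: Z.pow_pos_nonneg; lia.
have E' : A * C ^ 2 = B * (2 ^ Z.of_nat k.+1 * D) ^ 2.
  apply: (Z.mul_reg_l _ _ ((2 ^ Z.of_nat m) ^ 2)); first by nia.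
  rewrite def_n Nat2Z.inj_add (Z.pow_add_r 2 _ _ (Nat2Z.is_nonneg _) (Nat2Z.is_nonneg _)) in E.
  by transitivity (A * (2 ^ Z.of_nat m * C) ^ 2); [ring | rewrite E; ring].
by move/(congr1 Z.odd): E'; rewrite !Z.odd_mul !Z.odd_pow ?oA ?oB ?oC ?oD //=.
Qed.

Lemma odd_mul_sq_pow2_inj (A B C D : Z) (m n : nat) :
  Z.odd A -> Z.odd B -> Z.odd C -> Z.odd D ->
  A * (2 ^ Z.of_nat m * C) ^ 2 = B * (2 ^ Z.of_nat n * D) ^ 2 -> m = n.
Proof.
move=> oA oB oC oD E; case: (ltngtP m n) => // [lt_mn|lt_nm].
  by case: (odd_mul_sq_pow2_neq oA oB oC oD lt_mn E).
by case: (odd_mul_sq_pow2_neq oB oA oD oC lt_nm (esym E)).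
Qed.

Definition Ecurve := jcurve 674 (- 1250 ^ 2) (- (674 * 1250 ^ 2)).
Definition Edouble := jdouble 674 (- 1250 ^ 2).

(* the point of E giving the solution (y, z) = (231/136, 1309/288) *)
Definition base_point : jpoint := JPoint 128225 47222175 4.

Definition doubling_orbit (n : nat) : jpoint := iter n Edouble base_point.

Lemma doubling_orbitP n :
  Ecurve (doubling_orbit n) /\ jodd_v2 n.+2 (doubling_orbit n).
Proof.
elim: n => [|n [onE odd_v2]].
  by split; [reflexivity | split=> //; exists 1].
by split; [apply: jcurve_double | apply: jdouble_v2].
Qed.

Lemma doubling_orbit_z_neq0 n : jz (doubling_orbit n) <> 0.
Proof.
have [_ [_ _ [W oW ->]]] := doubling_orbitP n.
case/Z.eq_mul_0 => [|W0]; last by rewrite W0 in oW.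
by apply: Z.pow_nonzero; lia.
Qed.

Lemma doubling_orbit_cross_inj n m :
  jx (doubling_orbit n) * jz (doubling_orbit m) ^ 2 =
  jx (doubling_orbit m) * jz (doubling_orbit n) ^ 2 -> n = m.
Proof.
have [_ [oXn _ [Wn oWn ->]]] := doubling_orbitP n.
have [_ [oXm _ [Wm oWm ->]]] := doubling_orbitP m.
by move/(odd_mul_sq_pow2_inj oXn oXm oWm oWn) => [->].
Qed.

End IntegralJacobianPoints.

Section RealPoints.
Local Open Scope Z_scope.
Variable R : numFieldType.

Definition Zr (n : Z) : R := (int_of_Z n)%:~R.

Lemma ZrD m n : Zr (m + n) = (Zr m + Zr n)%R.
Proof. by rewrite /Zr (rmorphD int_of_Z) intrD. Qed.

Lemma ZrN n : Zr (- n) = (- Zr n)%R.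
Proof. by rewrite /Zr (rmorphN int_of_Z) intrN. Qed.

Lemma ZrM m n : Zr (m * n) = (Zr m * Zr n)%R.
Proof. by rewrite /Zr (rmorphM int_of_Z) intrM. Qed.

Lemma ZrX m (n : nat) : Zr (m ^ Z.of_nat n) = (Zr m ^+ n)%R.
Proof.
elim: n => [|n IHn]; first by rewrite expr0.
rewrite Nat2Z.inj_succ Z.pow_succ_r; last exact: Nat2Z.is_nonneg.
by rewrite ZrM IHn exprS.
Qed.

Lemma Zr_inj : injective Zr.
Proof. by move=> m n /intr_inj /(can_inj int_of_ZK). Qed.

Lemma Zr_neq0 n : n <> 0 -> (Zr n != 0)%R.
Proof. by move=> n0; apply/eqP => /(@Zr_inj n 0). Qed.

Definition affine (P : jpoint) : R * R :=
  (Zr (jx P) / Zr (jz P) ^+ 2, Zr (jy P) / Zr (jz P) ^+ 3)%R.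

Lemma affine_x_eq P Q : jz P <> 0 -> jz Q <> 0 -> (affine P).1 = (affine Q).1 ->
  jx P * jz Q ^ 2 = jx Q * jz P ^ 2.
Proof.
move=> /Zr_neq0 zP /Zr_neq0 zQ /= /eqP; rewrite eqr_div ?expf_neq0 // => /eqP.
by rewrite -!(ZrX _ 2) -!ZrM => /Zr_inj.
Qed.

End RealPoints.

Section RealSolutions.
Local Open Scope ring_scope.
Variable R : realFieldType.

Lemma affine_on_curve a b c P : Zr R (jz P) != 0 -> jcurve a b c P ->
  let x := (affine R P).1 in
  (affine R P).2 ^+ 2 = x ^+ 3 + Zr R a * x ^+ 2 + Zr R b * x + Zr R c.
Proof.
move=> z0 onC /=.
have -> : (Zr R (jy P) / Zr R (jz P) ^+ 3) ^+ 2 = Zr R (jy P) ^+ 2 / Zr R (jz P) ^+ 6.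
  by field.
have -> : Zr R (jy P) ^+ 2 = Zr R (jx P) ^+ 3 + Zr R a * Zr R (jx P) ^+ 2 * Zr R (jz P) ^+ 2
    + Zr R b * Zr R (jx P) * Zr R (jz P) ^+ 4 + Zr R c * Zr R (jz P) ^+ 6.
  by rewrite -!ZrX -!ZrM -!ZrD; apply: congr1; exact: onC.
by field.
Qed.

Lemma doubling_orbit_on_E n : let p := affine R (doubling_orbit n) in
  p.2 ^+ 2 = (p.1 + 674) * (p.1 ^+ 2 - 1250 ^+ 2) /\ p.2 != 0.
Proof.
have [onE [_ oY _]] := doubling_orbitP n.
have z0 := Zr_neq0 R (@doubling_orbit_z_neq0 n).
split.
  have [c674 c1250] : Zr R 674 = 674 /\ Zr R 1250 = 1250 by [].
  rewrite [LHS](affine_on_curve z0 onE) !ZrN ZrM !(ZrX R _ 2) c674 c1250.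
  by ring.
apply: mulf_neq0; last by rewrite invr_eq0 expf_neq0.
by apply: Zr_neq0 => y0; rewrite y0 in oY.
Qed.

Lemma doubling_orbit_x_injective : injective (fun n => (affine R (doubling_orbit n)).1).
Proof.
move=> n m /affine_x_eq E.
exact/doubling_orbit_cross_inj/E/doubling_orbit_z_neq0/doubling_orbit_z_neq0.
Qed.

Lemma quartic_of_curve (x Y : R) :
  Y ^+ 2 = (x + 674) * (x ^+ 2 - 1250 ^+ 2) -> x + 674 != 0 ->
  let t := Y / (50 * (x + 674)) in
  (t ^+ 2 - x / 1250) ^+ 2 = t ^+ 4 + 674 / 625 * t ^+ 2 + 1.
Proof.
move=> onE x674 t.
have t2 : t ^+ 2 = (x ^+ 2 - 1250 ^+ 2) / (2500 * (x + 674)).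
  by rewrite /t expr_div_n onE; field.
by rewrite (exprM t 2 2) t2; field.
Qed.

Lemma solution_of_quartic (y w : R) :
  0 < y -> w ^+ 2 = y ^+ 4 + 674 / 625 * y ^+ 2 + 1 ->
  let z := 24 * y / (25 * (1 + y ^+ 2 + w)) in
  0 < z /\ 25 / 12 * (y + y^-1) = z + z^-1.
Proof.
move=> y_gt0 onQ z.
have D_gt0 : 0 < 1 + y ^+ 2 + w.
  (* w^2 < (1 + y^2)^2 because 674/625 < 2 *)
  have y2_gt0 : 0 < y ^+ 2 by rewrite exprn_gt0.
  rewrite (exprM y 2 2) in onQ.
  move: onQ y2_gt0; set u := y ^+ 2 => onQ u_gt0; nra.
have z_gt0 : 0 < z by rewrite /z divr_gt0 ?mulr_gt0.
split=> //.
have [y0 D0] := (lt0r_neq0 y_gt0, lt0r_neq0 D_gt0).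
apply/eqP; rewrite -subr_eq0; apply/eqP.
have -> : 25 / 12 * (y + y^-1) - (z + z^-1) =
    - (25 / 24) * (w ^+ 2 - (y ^+ 4 + 674 / 625 * y ^+ 2 + 1)) / (y * (1 + y ^+ 2 + w)).
  by rewrite /z; field; rewrite D0 y0.
by rewrite onQ subrr mulr0 mul0r.
Qed.

(* the inverse of the birational map from E to the quartic, read off a solution *)
Definition x_of_solution (q : R * R) : R :=
  1250 * (2 * q.1 ^+ 2 + 1 - 24 * q.1 / (25 * q.2)).

Lemma x_of_solutionE (y w : R) : y != 0 -> 1 + y ^+ 2 + w != 0 ->
  x_of_solution (y, 24 * y / (25 * (1 + y ^+ 2 + w))) = 1250 * (y ^+ 2 - w).
Proof. by move=> y0 D0; rewrite /x_of_solution /=; field; rewrite D0 y0. Qed.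

Lemma solution_of_abscissa (t x : R) : t != 0 ->
  (t ^+ 2 - x / 1250) ^+ 2 = t ^+ 4 + 674 / 625 * t ^+ 2 + 1 ->
  let y : R := `|t| in let z := 24 * y / (25 * (1 + y ^+ 2 + (t ^+ 2 - x / 1250))) in
  [/\ 0 < y, 0 < z, 25 / 12 * (y + y^-1) = z + z^-1 & x_of_solution (y, z) = x].
Proof.
move=> t0 onQ y z.
have y_gt0 : 0 < y by rewrite normr_gt0.
have y2 : y ^+ 2 = t ^+ 2 by rewrite real_normK ?num_real.
have onQy : (t ^+ 2 - x / 1250) ^+ 2 = y ^+ 4 + 674 / 625 * y ^+ 2 + 1.
  by rewrite onQ (exprM y 2 2) y2 -exprM.
have [z_gt0 solves] := solution_of_quartic y_gt0 onQy.
split=> //.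
have D0 : 1 + y ^+ 2 + (t ^+ 2 - x / 1250) != 0.
  by apply: contraTneq z_gt0 => D0; rewrite /z D0 mulr0 invr0 mulr0 ltxx.
by rewrite /z (x_of_solutionE (lt0r_neq0 y_gt0) D0) y2; field.
Qed.

Definition solution_of_point (p : R * R) : R * R :=
  let t := p.2 / (50 * (p.1 + 674)) in
  let y := `|t| in
  (y, 24 * y / (25 * (1 + y ^+ 2 + (t ^+ 2 - p.1 / 1250)))).

Lemma solution_of_pointP (x Y : R) :
  Y ^+ 2 = (x + 674) * (x ^+ 2 - 1250 ^+ 2) -> Y != 0 ->
  let q := solution_of_point (x, Y) in
  [/\ 0 < q.1, 0 < q.2, 25 / 12 * (q.1 + q.1^-1) = q.2 + q.2^-1 & x_of_solution q = x].
Proof.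
move=> onE Y0.
have x674 : x + 674 != 0.
  by apply: contraNneq Y0 => x674; rewrite -sqrf_eq0 onE x674 mul0r.
apply: solution_of_abscissa; last exact: quartic_of_curve.
by rewrite /= mulf_neq0 // invr_eq0 mulf_neq0 // pnatr_eq0.
Qed.

End RealSolutions.

Lemma exists_notin_of_injective (T : eqType) (g : nat -> T) :
  injective g -> forall s : seq T, exists n, g n \notin s.
Proof.
move=> g_inj s; pose L := map g (iota 0 (size s).+1).
have uniqL : uniq L by rewrite map_inj_uniq ?iota_uniq.
have : ~~ all (mem s) L.
  apply/negP => /allP /(uniq_leq_size uniqL).
  by rewrite size_map size_iota ltnn.
by case/allPn => _ /mapP [n _ ->]; exists n.
Qed.

Local Open Scope ring_scope.

Lemma f_four_thirds : f (4%:Q / 3%:Q) = 25 / 12.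
Proof. by rewrite /f; field. Qed.

Theorem mainTheorem8 :
  forall s : seq (rat * rat),
    exists y z : rat,
      [/\ 0 < y, 0 < z, f (4%:Q / 3%:Q) * f y = f z & (y, z) \notin s].
Proof.
pose sol n := solution_of_point (affine rat (doubling_orbit n)).
have solP n : [/\ 0 < (sol n).1, 0 < (sol n).2, 25 / 12 * f (sol n).1 = f (sol n).2
    & x_of_solution (sol n) = (affine rat (doubling_orbit n)).1].
  by have [onE Y0] := doubling_orbit_on_E rat n; exact: solution_of_pointP.
have sol_inj : injective sol.
  move=> n m eq_sol; apply: (@doubling_orbit_x_injective rat).
  by have [_ _ _ <-] := solP n; have [_ _ _ <-] := solP m; rewrite -/(sol n) eq_sol.
move=> s; have [n notin_s] := exists_notin_of_injective sol_inj s.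
have [y_gt0 z_gt0 solves _] := solP n.
exists (sol n).1, (sol n).2.
by split; [exact: y_gt0 | exact: z_gt0 | rewrite f_four_thirds | exact: notin_s].
Qed.
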